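(* For every $\epsilon>0$, $\rho^h\in\mathcal{P}(\mathcal{T}^h)$ with positive entries, and $(K,L)\in\Sigma^h$, the Scharfetter--Gummel flux \[ \mathcal{J}^{h,\rho}_{K|L}=\epsilon\tau_{K|L}\big(\mathfrak b(q_{K|L}/\epsilon)u_K-\mathfrak b(-q_{K|L}/\epsilon)u_L\big),\qquad \mathfrak b(s)=\frac{s}{e^s-1},\ u_K=\frac{\rho^h_K}{|K|}, \] satisfies $\mathcal{J}^{h,\rho}_{K|L}=D_2\overline{\mathcal{R}}^*_{\epsilon,h}\big(\rho^h,-\overline\nabla\mathcal{E}'_{\epsilon,h}(\rho^h)\big)(K,L)$, where $\overline{\mathcal{R}}^*_{\epsilon,h}$ is the `cosh' dual dissipation potential with edge conductivity $\vartheta^{\epsilon,h,\rho}$ defined below. In particular, the Scharfetter--Gummel scheme $\partial_t\rho^h_K+\sum_{L\in\mathcal{T}^h_K}\mathcal{J}^{h,\rho}_{K|L}=0$ possesses the `cosh' gradient flow structure with driving energy $\mathcal{E}_{\epsilon,h}$.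
   Context: $(\mathcal{T}^h,\Sigma^h)$ is a tessellation of a bounded domain: finite family of disjoint cells $K$ with volumes $|K|$, $\Sigma^h$ the set of ordered pairs of cells sharing a face $(K|L)$; $x_K$ barycenter, $\tau_{K|L}=|(K|L)|/|x_L-x_K|$, $\mathcal{T}^h_K=\{L:(K,L)\in\Sigma^h\}$. Given $V_K\in\mathbb{R}$ and symmetric $W_{KL}\in\mathbb{R}$, set $\mathsf{Q}^{h,\rho}_K=V_K+\sum_MW_{KM}\rho^h_M$ and $q_{K|L}=\mathsf{Q}^{h,\rho}_L-\mathsf{Q}^{h,\rho}_K$. Energy $\mathcal{E}_{\epsilon,h}(\rho)=\epsilon\sum_K\phi(u_K)|K|+\sum_KV_K\rho_K+\frac12\sum_{K,L}W_{KL}\rho_K\rho_L$ with $\phi(s)=s\log s-s+1$; its variational derivative is taken as $\mathcal{E}'_{\epsilon,h}(\rho)_K=\epsilon(\log\rho_K-\log\pi^{\epsilon,h,\rho}_K)$, with $\pi^{\epsilon,h,\rho}_K=|K|e^{-\mathsf{Q}^{h,\rho}_K/\epsilon}/Z^{\epsilon,h,\rho}$, $Z^{\epsilon,h,\rho}=\sum_K|K|e^{-\mathsf{Q}^{h,\rho}_K/\epsilon}$; $\overline\nabla f(K,L)=f(L)-f(K)$. Edge conductivity $\vartheta^{\epsilon,h,\rho}_{K|L}=\frac{\tau_{K|L}}{Z^{\epsilon,h,\rho}}\frac{2q_{K|L}/\epsilon}{\exp(\mathsf{Q}^{h,\rho}_L/\epsilon)-\exp(\mathsf{Q}^{h,\rho}_K/\epsilon)}$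 (extended continuously when $q_{K|L}=0$). `Cosh' dual dissipation potential: $\overline{\mathcal{R}}^*_{\epsilon,h}(\rho,\xi)=\frac12\sum_{(K,L)\in\Sigma^h}\Psi^*_\epsilon(\xi_{K|L})\sqrt{\bar u_K\bar u_L}\,\vartheta^{\epsilon,h,\rho}_{K|L}$ with $\bar u_K=\rho_K/\pi^{\epsilon,h,\rho}_K$ and $\Psi^*_\epsilon(s)=4\epsilon^2(\cosh(s/2\epsilon)-1)$; $D_2$ denotes the partial derivative in $\xi_{K|L}$ with $\vartheta^{\epsilon,h,\rho}$ held fixed. *)

From mathcomp Require Import all_boot all_order all_algebra.
From mathcomp Require Import all_classical all_reals all_analysis.
Set Implicit Arguments. Unset Strict Implicit. Unset Printing Implicit Defensive.
Import Order.TTheory GRing.Theory Num.Theory.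
Import numFieldNormedType.Exports.
Local Open Scope ring_scope.

Section SG.
Variables (R : realType) (T : finType).

Definition coshR (s : R) : R := (expR s + expR (- s)) / 2.

Definition edist (d : nat) (a b : 'rV[R]_d) : R :=
  Num.sqrt (\sum_(i < d) (b ord0 i - a ord0 i) ^+ 2).

Definition tau (d : nat) (face : T -> T -> R) (x : T -> 'rV[R]_d) (K L : T) : R :=
  face K L / edist (x K) (x L).

Variables (vol : T -> R) (V : T -> R) (W : T -> T -> R).

Definition Qpot (rho : T -> R) (K : T) : R := V K + \sum_M W K M * rho M.
Definition qKL (rho : T -> R) (K L : T) : R := Qpot rho L - Qpot rho K.

Definition Zpart (eps : R) (rho : T -> R) : R :=
  \sum_K vol K * expR (- Qpot rho K / eps).
Definition piS (eps : R) (rho : T -> R) (K : T) : R :=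
  vol K * expR (- Qpot rho K / eps) / Zpart eps rho.

Definition Eprime (eps : R) (rho : T -> R) (K : T) : R :=
  eps * (ln (rho K) - ln (piS eps rho K)).

Definition gradbar (f : T -> R) (K L : T) : R := f L - f K.

(* edge conductivity, extended continuously at q_{K|L} = 0 *)
Definition theta (eps : R) (tauf : T -> T -> R) (rho : T -> R) (K L : T) : R :=
  if qKL rho K L == 0 then
    tauf K L / Zpart eps rho * (2 * expR (- Qpot rho K / eps))
  else
    tauf K L / Zpart eps rho *
    ((2 * qKL rho K L / eps) / (expR (Qpot rho L / eps) - expR (Qpot rho K / eps))).

Definition Psistar (eps s : R) : R := 4 * eps ^+ 2 * (coshR (s / (2 * eps)) - 1).

Definition ubar (eps : R) (rho : T -> R) (K : T) : R := rho K / piS eps rho K.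

(* 'cosh' dual dissipation potential, with the conductivity th given as an
   explicit (fixed) argument; xi is a function on ordered pairs *)
Definition Rstar (eps : R) (Sigma : rel T) (rho : T -> R) (th : T -> T -> R)
    (xi : T -> T -> R) : R :=
  2^-1 * \sum_(p : T * T | Sigma p.1 p.2)
     Psistar eps (xi p.1 p.2) * Num.sqrt (ubar eps rho p.1 * ubar eps rho p.2)
     * th p.1 p.2.

Definition updxi (xi : T -> T -> R) (K L : T) (s : R) : T -> T -> R :=
  fun K' L' => if (K' == K) && (L' == L) then s else xi K' L'.

Definition bern (s : R) : R := if s == 0 then 1 else s / (expR s - 1).

Definition SGflux (eps : R) (tauf : T -> T -> R) (rho : T -> R) (K L : T) : R :=
  eps * tauf K L *
  (bern (qKL rho K L / eps) * (rho K / vol K)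
   - bern (- qKL rho K L / eps) * (rho L / vol L)).

End SG.

From mathcomp Require Import all_boot all_order all_algebra.
From mathcomp Require Import all_classical all_reals all_analysis.
From mathcomp Require Import ring.
Set Implicit Arguments. Unset Strict Implicit. Unset Printing Implicit Defensive.
Import Order.TTheory GRing.Theory Num.Theory.
Import numFieldNormedType.Exports.
Local Open Scope ring_scope.

(* As a function of the single entry xi_{K|L}, the dual potential is affine in
   Psi*_eps, with slope sqrt(ubar_K ubar_L) theta_{K|L} / 2, and
   Psi*_eps'(xi) = 2 eps sinh(xi / 2 eps).  At xi = -grad E' = eps (ln ubar_K - ln ubar_L)
   the square root cancels against the sinh, leaving eps theta_{K|L} (ubar_K - ubar_L) / 2.
   Writing theta_{K|L} = 2 tau_{K|L} b(q/eps) e^{-Q_K/eps} / Z (which also covers the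
   continuous extension at q = 0), ubar_K = u_K Z e^{Q_K/eps}, and using
   b(-s) = e^s b(s), this is the Scharfetter-Gummel flux. *)

Section RealFacts.
Variable R : realType.

Lemma is_derive_coshR (x : R) : is_derive x 1 (@coshR R) ((expR x - expR (- x)) / 2).
Proof.
have -> : @coshR R = (expR + (expR \o -%R)) * cst 2^-1.
  by apply/funext => s; rewrite /coshR !fctE.
have dexpN := is_derive1_comp (is_derive_expR (- x)) (is_deriveNid x 1).
apply: is_derive_eq (is_deriveM (is_deriveD (is_derive_expR x) dexpN)
  (is_derive_cst _ x 1)) _.
by rewrite !fctE /= /GRing.scale /=; ring.
Qed.

Lemma Psistar0 (eps : R) : Psistar eps 0 = 0.
Proof. by rewrite /Psistar /coshR mul0r oppr0 expR0; field. Qed.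

Lemma is_derive_Psistar (eps x : R) : eps != 0 ->
  is_derive x 1 (Psistar eps)
    (eps * (expR (x / (2 * eps)) - expR (- (x / (2 * eps))))).
Proof.
move=> eps0; pose k := (2 * eps)^-1.
have -> : Psistar eps = cst (4 * eps ^+ 2) * (@coshR R \o (k \*: id) - cst 1).
  by apply/funext => s; rewrite /Psistar !fctE /= /GRing.scale /= [k * _]mulrC.
have dcosh := is_derive1_comp (is_derive_coshR (k *: x))
  (is_deriveZ k (is_derive_id x 1)).
apply: is_derive_eq (is_deriveM (is_derive_cst _ x 1)
  (is_deriveB dcosh (is_derive_cst _ x 1))) _.
rewrite !fctE /= /GRing.scale /= /k mulr1 mulr0 subr0 addr0 [(2 * eps)^-1 * x]mulrC.
by field; rewrite eps0.
Qed.

Lemma expR_half_ln (a : R) : 0 < a -> expR (ln a / 2) = Num.sqrt a.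
Proof. by move=> a0; rewrite -powR12_sqrt ?ltW // /powR gt_eqF // mulrC. Qed.

Lemma sqrtrM_expR_half_lnB (a b : R) : 0 < a -> 0 < b ->
  Num.sqrt (a * b) * (expR ((ln a - ln b) / 2) - expR ((ln b - ln a) / 2)) = a - b.
Proof.
move=> a0 b0; rewrite !mulrBl !expRB !expR_half_ln // sqrtrM ?ltW //.
have sa0 : Num.sqrt a != 0 by rewrite gt_eqF ?sqrtr_gt0.
have sb0 : Num.sqrt b != 0 by rewrite gt_eqF ?sqrtr_gt0.
rewrite -[in RHS](sqr_sqrtr (ltW a0)) -[in RHS](sqr_sqrtr (ltW b0)).
by field; rewrite sa0 sb0.
Qed.

Lemma bernN (s : R) : bern (- s) = expR s * bern s.
Proof.
rewrite /bern oppr_eq0; have [->|s0] := eqVneq s 0; first by rewrite expR0 mulr1.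
have e1 : expR s - 1 != 0.
  by rewrite subr_eq0 -expR0; apply: contra s0 => /eqP/expR_inj ->.
have e0 : expR s != 0 by rewrite gt_eqF ?expR_gt0.
by rewrite expRN; field; rewrite e1 e0 mulN1r -opprB oppr_eq0 e1.
Qed.

Lemma bern_subE (a b : R) : a != b ->
  bern (b - a) = (b - a) * expR a / (expR b - expR a).
Proof.
move=> ab; rewrite /bern subr_eq0 eq_sym (negbTE ab) expRB.
have ea0 : expR a != 0 by rewrite gt_eqF ?expR_gt0.
have eab : expR b - expR a != 0.
  by rewrite subr_eq0; apply: contra ab => /eqP/expR_inj ->.
by field; rewrite eab ea0.
Qed.

End RealFacts.

Section ScharfetterGummel.
Variables (R : realType) (T : finType) (vol V : T -> R) (W : T -> T -> R).
Variables (eps : R) (rho : T -> R).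
Hypothesis vol_gt0 : forall K, 0 < vol K.
Hypothesis eps_neq0 : eps != 0.

Lemma Zpart_gt0 (K : T) : 0 < Zpart vol V W eps rho.
Proof.
rewrite /Zpart (bigD1 K) //= ltr_pwDl ?mulr_gt0 ?expR_gt0 //.
by apply: sumr_ge0 => J _; rewrite mulr_ge0 ?expR_ge0 ?ltW.
Qed.

Lemma piS_gt0 (K : T) : 0 < piS vol V W eps rho K.
Proof. by rewrite /piS mulr_gt0 ?invr_gt0 ?mulr_gt0 ?expR_gt0 ?(Zpart_gt0 K). Qed.

Lemma ubar_expR (K : T) :
  ubar vol V W eps rho K
  = rho K / vol K * Zpart vol V W eps rho * expR (Qpot V W rho K / eps).
Proof. by rewrite /ubar /piS mulNr expRN !invfM !invrK; ring. Qed.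

Lemma Eprime_ln_ubar (K : T) : 0 < rho K ->
  Eprime vol V W eps rho K = eps * ln (ubar vol V W eps rho K).
Proof. by move=> rhoK; rewrite /Eprime /ubar ln_div ?posrE ?piS_gt0. Qed.

Lemma theta_bern (tauf : T -> T -> R) (K L : T) :
  theta vol V W eps tauf rho K L
  = tauf K L / Zpart vol V W eps rho
    * (2 * bern (qKL V W rho K L / eps) * expR (- Qpot V W rho K / eps)).
Proof.
rewrite /theta; case: eqP => [->|/eqP q0]; first by rewrite mul0r /bern eqxx mulr1.
have QKL : Qpot V W rho K / eps != Qpot V W rho L / eps.
  apply: contra q0 => /eqP QKL.
  by rewrite /qKL -(divfK eps_neq0 (Qpot _ _ _ L)) -QKL divfK ?subrr.
rewrite /qKL mulrBl bern_subE // mulNr expRN.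
have eK0 : expR (Qpot V W rho K / eps) != 0 by rewrite gt_eqF ?expR_gt0.
have eLK : expR (Qpot V W rho L / eps) - expR (Qpot V W rho K / eps) != 0.
  by rewrite subr_eq0 eq_sym; apply: contra QKL => /eqP/expR_inj ->.
congr (_ * _); field; by rewrite eK0 eLK eps_neq0.
Qed.

Lemma SGflux_theta (tauf : T -> T -> R) (K L : T) :
  eps * theta vol V W eps tauf rho K L
      * (ubar vol V W eps rho K - ubar vol V W eps rho L) / 2
  = SGflux vol V W eps tauf rho K L.
Proof.
rewrite theta_bern !ubar_expR /SGflux !mulNr bernN /qKL mulrBl expRB expRN.
have Z0 : Zpart vol V W eps rho != 0 by rewrite gt_eqF ?(Zpart_gt0 K).
have eK0 : expR (Qpot V W rho K / eps) != 0 by rewrite gt_eqF ?expR_gt0.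
set uK := rho K / vol K; set uL := rho L / vol L.
by field; rewrite Z0 eK0.
Qed.

Lemma updxi_eq (xi : T -> T -> R) (K L : T) (s : R) : updxi xi K L s K L = s.
Proof. by rewrite /updxi !eqxx. Qed.

Lemma updxi_neq (xi : T -> T -> R) (K L : T) (s : R) (p : T * T) :
  p != (K, L) -> updxi xi K L s p.1 p.2 = xi p.1 p.2.
Proof.
case: p => K' L' /= KL'; rewrite /updxi ifF //.
by apply: contraNF KL' => /andP[/eqP-> /eqP->].
Qed.

Lemma Rstar_updxi (Sigma : rel T) (th xi : T -> T -> R) (K L : T) (s : R) :
  Sigma K L ->
  Rstar vol V W eps Sigma rho th (updxi xi K L s)
  = Rstar vol V W eps Sigma rho th (updxi xi K L 0)
    + 2^-1 * (Num.sqrt (ubar vol V W eps rho K * ubar vol V W eps rho L) * th K L)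
      * Psistar eps s.
Proof.
move=> SKL; rewrite /Rstar [in LHS](bigD1 (K, L)) // [in RHS](bigD1 (K, L)) //=.
rewrite !updxi_eq Psistar0 !mul0r add0r.
under eq_bigr => p /andP[_ pKL] do rewrite updxi_neq //.
under [in RHS]eq_bigr => p /andP[_ pKL] do rewrite updxi_neq //.
ring.
Qed.

Lemma is_derive_Rstar_updxi (Sigma : rel T) (th xi : T -> T -> R) (K L : T) (x : R) :
  Sigma K L ->
  is_derive x 1 (fun s => Rstar vol V W eps Sigma rho th (updxi xi K L s))
    (2^-1 * (Num.sqrt (ubar vol V W eps rho K * ubar vol V W eps rho L) * th K L)
     * (eps * (expR (x / (2 * eps)) - expR (- (x / (2 * eps)))))).
Proof.
move=> SKL; set w := _ * th K L.
have -> : (fun s => Rstar vol V W eps Sigma rho th (updxi xi K L s))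
    = cst (Rstar vol V W eps Sigma rho th (updxi xi K L 0))
      + cst (2^-1 * w) * Psistar eps.
  by apply/funext => s; rewrite Rstar_updxi // !fctE.
apply: is_derive_eq (is_deriveD (is_derive_cst _ x 1)
  (is_deriveM (is_derive_cst _ x 1) (is_derive_Psistar x eps_neq0))) _.
by rewrite !fctE /= /GRing.scale /= mulr0 !addr0 add0r.
Qed.

End ScharfetterGummel.

Theorem lemma3p6 (R : realType) (T : finType) (d : nat)
  (vol : T -> R) (Sigma : rel T) (face : T -> T -> R) (x : T -> 'rV[R]_d)
  (V : T -> R) (W : T -> T -> R) (eps : R) (rho : T -> R) (K L : T) :
  (forall K, 0 < vol K) ->
  symmetric Sigma -> irreflexive Sigma ->
  (forall K L, face K L = face L K) ->
  (forall K L, Sigma K L -> 0 < face K L) ->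
  (forall K L, Sigma K L -> x K != x L) ->
  (forall K L, W K L = W L K) ->
  0 < eps ->
  (forall K, 0 < rho K) -> \sum_K rho K = 1 ->
  Sigma K L ->
  let tauf := tau face x in
  let xi0 := fun K' L' => - gradbar (Eprime vol V W eps rho) K' L' in
  is_derive (xi0 K L) 1
    (fun s => Rstar vol V W eps Sigma rho (theta vol V W eps tauf rho)
                (updxi xi0 K L s))
    (SGflux vol V W eps tauf rho K L).
Proof.
move=> vol_gt0 _ _ _ _ _ _ eps_gt0 rho_gt0 _ SKL tauf xi0.
have eps_neq0 : eps != 0 by rewrite gt_eqF.
set u := ubar vol V W eps rho.
have u_gt0 J : 0 < u J by rewrite divr_gt0 ?(piS_gt0 V W eps rho vol_gt0).
have xi0E : xi0 K L / (2 * eps) = (ln (u K) - ln (u L)) / 2.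
  by rewrite /xi0 /gradbar !(Eprime_ln_ubar V W eps vol_gt0) //; field.
apply: is_derive_eq (is_derive_Rstar_updxi _ _ _ _ eps_neq0 _ _ _ SKL) _.
rewrite xi0E -mulNr opprB -(SGflux_theta V W rho vol_gt0 eps_neq0).
by rewrite -(sqrtrM_expR_half_lnB (u_gt0 K) (u_gt0 L)); ring.
Qed.
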